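(* Let $\mathbb{K}$ be any field and $n\geq 4$. Let $S$ be a linear subspace of $\mathrm{S}_n(\mathbb{K})$ in which every matrix has rank at most $3$. For $M\in S$ let $P(M)\in\mathrm{S}_{n-1}(\mathbb{K})$ be the upper-left $(n-1)\times(n-1)$ submatrix of $M$. Assume that $P(S)\subset\mathrm{WS}_{n-1,1,1}(\mathbb{K})$ and $\dim P(S)>5$. Then $S$ is congruent to a subspace of $\mathrm{WS}_{n,1,1}(\mathbb{K})$.
   Context: $\mathrm{S}_p(\mathbb{K})$ denotes the $p\times p$ symmetric matrices. $\mathrm{WS}_{p,1,1}(\mathbb{K})$ is the space of $M=(m_{i,j})\in\mathrm{S}_p(\mathbb{K})$ with $m_{i,j}=0$ whenever $i>1$, $j>1$ and $\max(i,j)>2$. Subsets $\mathcal{V},\mathcal{W}$ of $\mathrm{M}_n(\mathbb{K})$ are congruent if $\mathcal{V}=Q\mathcal{W}Q^T$ for some $Q\in\mathrm{GL}_n(\mathbb{K})$. *)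

From HB Require Import structures.
From mathcomp Require Import all_boot all_order all_algebra.
Set Implicit Arguments. Unset Strict Implicit. Unset Printing Implicit Defensive.
Import GRing.Theory.
Local Open Scope ring_scope.

(* WS_{p,1,1}(K): symmetric p x p matrices M with m_{i,j} = 0 whenever
   i > 1, j > 1 and max(i,j) > 2 (1-based); with 0-based indices:
   i >= 1, j >= 1 and max(i,j) >= 2. *)
Definition WS11 (K : fieldType) (p : nat) (M : 'M[K]_p) : Prop :=
  M^T = M /\
  (forall i j : 'I_p, (1 <= i)%N -> (1 <= j)%N -> (2 <= maxn i j)%N -> M i j = 0).

Definition upleft (K : fieldType) (n : nat) (M : 'M[K]_n) : 'M[K]_n.-1 :=
  \matrix_(i < n.-1, j < n.-1) M (widen_ord (leq_pred n) i) (widen_ord (leq_pred n) j).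

(* Let u_M and v_M be the entries of M in S on the first and last rows, in the
   middle columns 3, ..., n-1 (elsewhere in these columns, M vanishes). Rank at
   most 3 forces u_M and v_M to be proportional, since otherwise some 4 x 4 Gram
   submatrix is block triangular and invertible. As dim P(S) > 5, the vectors u_M
   span a plane, and polarizing the proportionality over S yields one scalar t
   with v_M = t u_M for all M in S. Then f = e_n - t e_1 is M-orthogonal to the
   middle basis vectors, and a second rank argument makes the Gram matrix of
   (e_2, f) singular for every M in S (first when u_M <> 0, then for all M since
   the determinant is quadratic in M). A linear space of singular binary forms
   either kills f or consists of multiples of one square, which gives the basis
   change replacing e_2 and e_n. *)

From HB Require Import structures.
From mathcomp Require Import all_boot all_order all_algebra.
From mathcomp Require Import ring zify.
From Stdlib Require Import Classical.
Import GRing.Theory.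
Set Implicit Arguments. Unset Strict Implicit. Unset Printing Implicit Defensive.
Local Open Scope ring_scope.

Local Notation "''[' u , v ]_ M" := (form idfun M u v) : ring_scope.

Lemma det_mx22 (K : comNzRingType) (A : 'M[K]_2) :
  \det A = A 0 0 * A 1 1 - A 0 1 * A 1 0.
Proof.
rewrite (expand_det_row _ 0) !big_ord_recl big_ord0 /cofactor !det_mx11 !mxE /=.
rewrite addr0 expr0 /= expr1 mul1r mulN1r mulrN.
by congr (A _ _ * A _ _ - A _ _ * A _ _); apply/val_inj.
Qed.

Section Forms.
Variables (K : fieldType) (n : nat).
Implicit Types (M : 'M[K]_n) (u v w : 'rV[K]_n).

Lemma formBl M u v w : '[u - v, w]_M = '[u, w]_M - '[v, w]_M.
Proof. by rewrite formDl formNl. Qed.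

Lemma formBr M u v w : '[u, v - w]_M = '[u, v]_M - '[u, w]_M.
Proof. by rewrite formDr formNr. Qed.

Lemma formDmx M N u v : '[u, v]_(M + N) = '[u, v]_M + '[u, v]_N.
Proof. by rewrite /form mulmxDr mulmxDl mxE. Qed.

Lemma form_sym M u v : M^T = M -> '[u, v]_M = '[v, u]_M.
Proof.
move=> Msym; rewrite /form !map_mx_id //.
have -> : (v *m M *m u^T) 0 0 = ((v *m M *m u^T)^T) 0 0 by rewrite [RHS]mxE.
by rewrite !trmx_mul trmxK Msym mulmxA.
Qed.

Lemma gram_rowsE a b (U : 'M[K]_(a, n)) (V : 'M[K]_(b, n)) M i j :
  (U *m M *m V^T) i j = '[row i U, row j V]_M.
Proof.
rewrite /form map_mx_id // !mxE; apply: eq_bigr => k _; rewrite !mxE.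
by congr (_ * _); apply: eq_bigr => l _; rewrite !mxE.
Qed.

Lemma mxrank_ge_gram m (U V : 'M[K]_(m, n)) M :
  U *m M *m V^T \in unitmx -> (m <= \rank M)%N.
Proof.
move/mxrank_unit <-; apply: leq_trans (mxrankM_maxl _ _) _; exact: mxrankM_maxr.
Qed.

Definition rows2 u v : 'M[K]_(2, n) := \matrix_(i < 2) (if i == 0 then u else v).

Lemma det_gram2 M u v u' v' :
  \det (rows2 u v *m M *m (rows2 u' v')^T) =
  '[u, u']_M * '[v, v']_M - '[u, v']_M * '[v, u']_M.
Proof. by rewrite det_mx22 !gram_rowsE !rowK. Qed.

Lemma mxrank_ge4 M (x y x' y' z w z' w' : 'rV[K]_n) :
  '[x, z']_M = 0 -> '[x, w']_M = 0 -> '[y, z']_M = 0 -> '[y, w']_M = 0 ->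
  ('[x, x']_M * '[y, y']_M - '[x, y']_M * '[y, x']_M) *
  ('[z, z']_M * '[w, w']_M - '[z, w']_M * '[w, z']_M) != 0 ->
  (4 <= \rank M)%N.
Proof.
move=> xz xw yz yw nz.
apply: (@mxrank_ge_gram (2 + 2) (col_mx (rows2 x y) (rows2 z w))
                          (col_mx (rows2 x' y') (rows2 z' w'))).
rewrite unitmxE unitfE tr_col_mx mul_col_mx mul_col_row.
have -> : rows2 x y *m M *m (rows2 z' w')^T = 0.
  by apply/matrixP => i j; rewrite gram_rowsE !rowK mxE; case: ifP; case: ifP.
by rewrite (@det_lblock _ 2 2) !det_gram2.
Qed.

End Forms.

Section Parallel.
Variables (K : fieldType) (I : Type) (P : {pred I}).
Implicit Types (u v z : I -> K) (t : K).

Definition parallel_on u v := {in P &, forall k l, u k * v l = u l * v k}.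

Lemma parallel_on_subr u v t :
  parallel_on u v -> parallel_on u (fun k => v k - t * u k).
Proof. by move=> uv k l kP lP; rewrite !mulrBr uv //; congr (_ - _); ring. Qed.

Lemma parallel_on_scale u v k0 : k0 \in P -> u k0 != 0 -> parallel_on u v ->
  {in P, forall k, v k = v k0 / u k0 * u k}.
Proof.
move=> k0P uk0 uv k kP; apply: (mulfI uk0); rewrite uv //; field; exact: uk0.
Qed.

Lemma wedge_support u1 u2 k0 l0 : k0 \in P -> l0 \in P ->
  u1 k0 * u2 l0 != u1 l0 * u2 k0 -> exists2 k, k \in P & u1 k != 0.
Proof.
move=> k0P l0P; have [u1k0|] := eqVneq (u1 k0) 0; last by exists k0.
have [u1l0|] := eqVneq (u1 l0) 0; last by exists l0.
by rewrite u1k0 u1l0 !mul0r eqxx.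
Qed.

Lemma parallel_on_eq0 u1 u2 z k0 l0 : k0 \in P -> l0 \in P ->
  u1 k0 * u2 l0 != u1 l0 * u2 k0 -> parallel_on u1 z -> parallel_on u2 z ->
  {in P, forall k, z k = 0}.
Proof.
move=> k0P l0P; rewrite -subr_eq0; set d := _ - _ => d_neq0 u1z u2z.
have dzl0 k : k \in P -> d * z k = (u1 k0 * u2 k - u2 k0 * u1 k) * z l0.
  move=> kP; have -> : d * z k = u1 k0 * (u2 l0 * z k) - u2 k0 * (u1 l0 * z k).
    by rewrite /d; ring.
  by rewrite (u2z l0 k) // (u1z l0 k) //; ring.
have dzk0 k : k \in P -> d * z k = (u2 l0 * u1 k - u1 l0 * u2 k) * z k0.
  move=> kP; have -> : d * z k = u2 l0 * (u1 k0 * z k) - u1 l0 * (u2 k0 * z k).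
    by rewrite /d; ring.
  by rewrite (u1z k0 k) // (u2z k0 k) //; ring.
have zk0 : z k0 = 0.
  by apply: (mulfI d_neq0); rewrite dzl0 // [u1 k0 * _]mulrC subrr mul0r mulr0.
by move=> k kP; apply: (mulfI d_neq0); rewrite dzk0 // zk0 !mulr0.
Qed.

Lemma parallel_on_sub_scale u v u' v' t :
  {in P, forall k, v' k = t * u' k} -> parallel_on u v ->
  parallel_on (fun k => u k + u' k) (fun k => v k + v' k) ->
  parallel_on u' (fun k => v k - t * u k).
Proof.
move=> v'E uv sum k l kP lP; have := sum k l kP lP; rewrite !v'E // => e.
pose c := t * (u k * u' l + u' k * u' l + u' k * u l).
have -> : u' k * (v l - t * u l) = (u k + u' k) * (v l + t * u' l) - u k * v l - c.
  by rewrite /c; ring.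
have -> : u' l * (v k - t * u k) = (u l + u' l) * (v k + t * u' k) - u l * v k - c.
  by rewrite /c; ring.
by rewrite e uv.
Qed.

End Parallel.

Lemma degenerate_forms_proportional (K : fieldType) (x y z x' y' z' : K) :
  z' != 0 -> x * z = y ^+ 2 -> x' * z' = y' ^+ 2 ->
  (x + x') * (z + z') = (y + y') ^+ 2 ->
  y = y' / z' * z /\ x = (y' / z') ^+ 2 * z.
Proof.
move=> z'_neq0 e e' e''.
have cross : x * z' + x' * z = 2 * y * y'.
  apply/eqP; rewrite -subr_eq0; apply/eqP.
  have -> : x * z' + x' * z - 2 * y * y' =
    ((x + x') * (z + z') - (y + y') ^+ 2) - (x * z - y ^+ 2) - (x' * z' - y' ^+ 2)
    by ring.
  by rewrite e e' e'' !subrr.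
have yz : y * z' = y' * z.
  apply/eqP; rewrite -subr_eq0 -sqrf_eq0; apply/eqP.
  have -> : (y * z' - y' * z) ^+ 2 = z * z' * ((x * z' + x' * z) - 2 * y * y')
      - z' ^+ 2 * (x * z - y ^+ 2) - z ^+ 2 * (x' * z' - y' ^+ 2) by ring.
  by rewrite cross e e' !subrr !mulr0 !subr0.
have yE : y = y' / z' * z by apply: (mulIf z'_neq0); rewrite yz mulrAC divfK.
split=> //; apply: (mulIf z'_neq0); apply: (mulIf z'_neq0).
have -> : x * z' * z' = z' * (x * z' + x' * z) - z * (x' * z') by ring.
rewrite cross e' -mulrA mulrCA mulrA [y * _]mulrC.
by rewrite yE; field.
Qed.

Lemma mul_eq_sqr_from_translates (K : fieldType) (x y z x1 y1 z1 x2 y2 z2 : K) :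
  x1 * z1 = y1 ^+ 2 -> x2 * z2 = y2 ^+ 2 ->
  (x1 + x2) * (z1 + z2) = (y1 + y2) ^+ 2 ->
  (x + x1) * (z + z1) = (y + y1) ^+ 2 -> (x + x2) * (z + z2) = (y + y2) ^+ 2 ->
  (x + (x1 + x2)) * (z + (z1 + z2)) = (y + (y1 + y2)) ^+ 2 -> x * z = y ^+ 2.
Proof.
move=> e1 e2 e12 e01 e02 e012; apply/eqP; rewrite -subr_eq0.
have -> : x * z - y ^+ 2 =
  ((x + x1) * (z + z1) - (y + y1) ^+ 2) + ((x + x2) * (z + z2) - (y + y2) ^+ 2)
  - ((x + (x1 + x2)) * (z + (z1 + z2)) - (y + (y1 + y2)) ^+ 2)
  + ((x1 + x2) * (z1 + z2) - (y1 + y2) ^+ 2) - (x1 * z1 - y1 ^+ 2)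
  - (x2 * z2 - y2 ^+ 2) by ring.
by rewrite e1 e2 e12 e01 e02 e012 !subrr !(addr0, subr0).
Qed.

Fact upleft_is_semilinear (K : fieldType) n : semilinear (@upleft K n).
Proof. by split=> [a A|A B]; apply/matrixP => i j; rewrite !mxE. Qed.
HB.instance Definition _ (K : fieldType) n :=
  GRing.isSemilinear.Build K 'M[K]_n 'M[K]_n.-1 _ (@upleft K n)
    (upleft_is_semilinear K n).

Section WeakShape.
Variables (K : fieldType) (p : nat).
Local Notation n := p.+4.

Definition i0 : 'I_n := ord0.
Definition i1 : 'I_n := Ordinal (isT : (1 < n)%N).
Definition iw : 'I_n := ord_max.
(* Indices are 0-based: [mid] is the paper's middle range 3, ..., n-1. *)
Definition mid := [pred k : 'I_n | (2 <= k < p.+3)%N].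

Lemma ord_cases (i : 'I_n) : [\/ i = i0, i = i1, i = iw | i \in mid].
Proof.
case: i => [[|[|i]] lti]; [by constructor 1; apply: val_inj
                           | by constructor 2; apply: val_inj |].
case: (ltnP i.+2 p.+3) => ip; first by constructor 4; rewrite inE ip.
by constructor 3; apply: val_inj => /=; lia.
Qed.

Lemma mid_eqF k : k \in mid ->
  [/\ (k == i0) = false, (k == i1) = false & (k == iw) = false].
Proof.
rewrite inE => /andP[k2 k3].
by split; apply/negbTE; rewrite -val_eqE /= -?(ltnn p.+3); lia.
Qed.

Lemma upleft_WS11_eq0 (M : 'M[K]_n) (i j : 'I_n) : WS11 (upleft M) ->
  (1 <= i < p.+3)%N -> (1 <= j < p.+3)%N -> (2 <= maxn i j)%N -> M i j = 0.
Proof.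
case=> _ ws /andP[ipos ip] /andP[jpos jp] ij.
have := ws (Ordinal ip) (Ordinal jp) ipos jpos ij; rewrite mxE.
by congr (M _ _ = 0); apply: val_inj.
Qed.

Definition shifted_ew (t : K) : 'rV[K]_n := 'e_iw - t *: 'e_i0.

Definition frame (P R : 'rV[K]_n) : 'M[K]_n :=
  \matrix_i (if i == i1 then P else if i == iw then R else 'e_i).

Lemma frame_sub P R :
  [/\ (P <= frame P R)%MS, (R <= frame P R)%MS & (('e_i0 : 'rV_n) <= frame P R)%MS].
Proof.
have := row_sub i1 (frame P R); have := row_sub iw (frame P R).
by have := row_sub i0 (frame P R); rewrite !rowK !eqxx /= => *; split.
Qed.

Lemma frame_unitmx P R :
  (('e_i1 : 'rV_n) <= frame P R)%MS -> (('e_iw : 'rV_n) <= frame P R)%MS ->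
  frame P R \in unitmx.
Proof.
move=> e1 ew; rewrite -row_full_unit -sub1mx; apply/row_subP => i; rewrite row1.
have [->|ni1] // := eqVneq i i1; have [->|niw] // := eqVneq i iw.
by move: (row_sub i (frame P R)); rewrite rowK (negbTE ni1) (negbTE niw).
Qed.

Section OneMatrix.
Variable M : 'M[K]_n.
Hypotheses (Msym : M^T = M) (Mws : WS11 (upleft M)).

Lemma mxsymE i j : M i j = M j i.
Proof. by rewrite -[in LHS]Msym mxE. Qed.

Lemma mid_mid_eq0 k l : k \in mid -> l \in mid -> M k l = 0.
Proof.
by rewrite !inE => /andP[? ?] /andP[? ?]; apply: upleft_WS11_eq0 => //=; lia.
Qed.

Lemma i1_mid_eq0 k : k \in mid -> M i1 k = 0.
Proof. by rewrite inE => /andP[? ?]; apply: upleft_WS11_eq0 => //=; lia. Qed.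

Lemma WS11_frame P R :
  {in mid, forall j, '[P, 'e_j]_M = 0} -> {in mid, forall j, '[R, 'e_j]_M = 0} ->
  '[P, R]_M = 0 -> '[R, R]_M = 0 -> WS11 (frame P R *m M *m (frame P R)^T).
Proof.
move=> Pmid Rmid PR RR; split; first by rewrite !trmx_mul trmxK Msym mulmxA.
move=> i j ipos jpos ij; rewrite gram_rowsE !rowK.
have rowE k : k \in mid -> (if k == i1 then P else if k == iw then R else 'e_k) = 'e_k.
  by case/mid_eqF => _ -> ->.
move: ipos jpos ij.
case: (ord_cases i) => [->|->|->|imid] //; case: (ord_cases j) => [->|->|->|jmid] //;
  rewrite ?rowE ?eqxx //= => _ _ _.
all: rewrite ?PR ?RR ?Pmid ?Rmid ?formee ?mid_mid_eq0 // form_sym //.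
all: by rewrite ?PR ?Pmid ?Rmid.
Qed.

Lemma upleft_row0_eq0 : {in mid, forall k, M i0 k = 0} ->
  upleft M = upleft (M i0 i0 *: delta_mx i0 i0
                     + M i0 i1 *: (delta_mx i0 i1 + delta_mx i1 i0)
                     + M i1 i1 *: delta_mx i1 i1).
Proof.
move=> row0; apply/matrixP => i j; rewrite !mxE.
have ltw k : widen_ord (leq_pred n) k != iw by rewrite -val_eqE /= neq_ltn ltn_ord.
move: (widen_ord _ i) (widen_ord _ j) (ltw i) (ltw j) => x y.
case: (ord_cases x) => [->|->|->|/[dup] xmid /mid_eqF[-> -> _]];
case: (ord_cases y) => [->|->|->|/[dup] ymid /mid_eqF[-> -> _]];
rewrite ?eqxx //= ?andbF !(mulr0, mulr1, addr0, add0r) => _ _.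
- by [].
- by [].
- exact: row0.
- exact: mxsymE.
- by [].
- exact: i1_mid_eq0.
- by rewrite mxsymE row0.
- by rewrite mxsymE i1_mid_eq0.
- exact: mid_mid_eq0.
Qed.

Lemma form_mid_shifted_ew t k :
  M iw k = t * M i0 k -> '['e_k, shifted_ew t]_M = 0.
Proof.
by move=> Mk; rewrite formBr formZr !formee (mxsymE k) (mxsymE k i0) Mk subrr.
Qed.

Hypothesis Mrank : (\rank M <= 3)%N.

Lemma row0_rowlast_parallel : parallel_on mid (M i0) (M iw).
Proof.
move=> k l kmid lmid; apply/eqP; rewrite -subr_eq0.
apply: contraTT Mrank => nz; rewrite -ltnNge.
apply: (@mxrank_ge4 _ _ M 'e_k 'e_l 'e_i0 'e_iw 'e_i0 'e_iw 'e_k 'e_l);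
  rewrite !formee ?(mid_mid_eq0 kmid kmid, mid_mid_eq0 kmid lmid,
                   mid_mid_eq0 lmid kmid, mid_mid_eq0 lmid lmid) //.
rewrite (mxsymE k i0) (mxsymE l iw) (mxsymE k iw) (mxsymE l i0).
by rewrite [M iw k * _]mulrC mulf_neq0.
Qed.

Lemma gram_i1_degenerate (f : 'rV[K]_n) k :
  k \in mid -> M i0 k != 0 -> '['e_k, f]_M = 0 ->
  '['e_i1, 'e_i1]_M * '[f, f]_M = '['e_i1, f]_M ^+ 2.
Proof.
move=> kmid Mk0 kf; apply/eqP; rewrite -subr_eq0.
apply: contraTT Mrank => nz; rewrite -ltnNge.
have Mk0' : M k i0 != 0 by rewrite mxsymE.
(* Subtracting multiples of e_k clears the pairings with e_i0, which makes the
   Gram matrix block triangular. *)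
pose al := M i1 i0 / M k i0; pose be := '[f, 'e_i0]_M / M k i0.
apply: (@mxrank_ge4 _ _ M ('e_i1 - al *: 'e_k) (f - be *: 'e_k) 'e_i1 f
                          'e_k 'e_i0 'e_k 'e_i0).
- by rewrite formBl formZl !formee i1_mid_eq0 // mid_mid_eq0 // mulr0 subr0.
- by rewrite formBl formZl !formee divfK // subrr.
- by rewrite formBl formZl form_sym // kf formee mid_mid_eq0 // mulr0 subr0.
- by rewrite formBl formZl formee divfK // subrr.
rewrite !formBl !formZl !formee kf (mxsymE k i1) (i1_mid_eq0 kmid).
rewrite (mid_mid_eq0 kmid kmid) (form_sym f 'e_i1) // !(mulr0, subr0) -expr2.
by rewrite formee in nz; rewrite mul0r sub0r mulf_neq0 // oppr_eq0 mulf_neq0 // mxsymE.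
Qed.

End OneMatrix.

Section Space.
Variable S : {vspace 'M[K]_n}.
Hypotheses (Ssym : forall M, M \in S -> M^T = M)
           (Srank : forall M, M \in S -> (\rank M <= 3)%N)
           (Sws : forall M, M \in S -> WS11 (upleft M)).

Lemma row0_rowlast_parallelS M : M \in S -> parallel_on mid (M i0) (M iw).
Proof.
by move=> MS; apply: row0_rowlast_parallel; [exact: Ssym | exact: Sws | exact: Srank].
Qed.

Lemma row0_rowlast_parallelD M N : M \in S -> N \in S ->
  parallel_on mid (fun k => M i0 k + N i0 k) (fun k => M iw k + N iw k).
Proof.
move=> MS NS k l kmid lmid.
by have := row0_rowlast_parallelS (memvD MS NS) kmid lmid; rewrite !mxE.
Qed.

Lemma dim_upleft_le4 : {in S &, forall M1 M2 : 'M_n, parallel_on mid (M1 i0) (M2 i0)} ->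
  (\dim (linfun (@upleft K n) @: S) <= 4)%N.
Proof.
move=> row0par.
have [M0 M0S M0gen] : exists2 M0, M0 \in S &
    forall M, M \in S -> exists la, {in mid, forall k, M i0 k = la * M0 i0 k}.
  have [[M0 M0S [k kmid M0k]] | row0_eq0] :=
    classic (exists2 M0, M0 \in S & exists2 k, k \in mid & M0 i0 k != 0).
    exists M0 => // M MS; exists (M i0 k / M0 i0 k).
    exact: parallel_on_scale kmid M0k (row0par _ _ M0S MS).
  exists 0 => [|M MS]; first exact: mem0v.
  exists 0 => k kmid; rewrite mul0r; apply/eqP; apply: contra_notT row0_eq0 => Mk.
  by exists M => //; exists k.
pose E01 : 'M[K]_n := delta_mx i0 i1 + delta_mx i1 i0.
pose B := [:: M0; delta_mx i0 i0; E01; delta_mx i1 i1].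
apply: leq_trans (dimvS (_ : _ <= linfun (@upleft K n) @: <<B>>)%VS) _; last first.
  apply: leq_trans (dim_span B).
  by rewrite -(limg_ker_dim (linfun (@upleft K n)) <<B>>) leq_addl.
apply/subvP => _ /memv_imgP[M MS ->].
have [la Mla] := M0gen M MS.
set N := M - la *: M0.
have NS : N \in S by rewrite memvB ?memvZ.
have -> : linfun (@upleft K n) M = linfun (@upleft K n)
    (la *: M0 + (N i0 i0 *: delta_mx i0 i0 + N i0 i1 *: E01 + N i1 i1 *: delta_mx i1 i1)).
  rewrite !lfunE /= linearD /= /E01 -(upleft_row0_eq0 (Ssym NS) (Sws NS)); last first.
    by move=> k kmid; rewrite !mxE Mla // subrr.
  by rewrite /N linearB /= addrC subrK.
by rewrite memv_img // !memvD ?memvZ ?memv_span ?inE ?eqxx ?orbT.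
Qed.

Lemma exists_row0_indep : (4 < \dim (linfun (@upleft K n) @: S))%N ->
  exists M1 M2 k0 l0, [/\ M1 \in S, M2 \in S, k0 \in mid, l0 \in mid &
                          M1 i0 k0 * M2 i0 l0 != M1 i0 l0 * M2 i0 k0].
Proof.
move=> dim_gt4; apply: NNPP => no_indep; move: dim_gt4; rewrite ltnNge dim_upleft_le4 //.
move=> M1 M2 M1S M2S k l kmid lmid; apply/eqP; apply: contra_notT no_indep => nz.
by exists M1, M2, k, l.
Qed.

Section Independent.
Variables (M1 M2 : 'M[K]_n) (k0 l0 : 'I_n).
Hypotheses (M1S : M1 \in S) (M2S : M2 \in S) (k0mid : k0 \in mid) (l0mid : l0 \in mid)
           (indep : M1 i0 k0 * M2 i0 l0 != M1 i0 l0 * M2 i0 k0).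

Lemma rowlast_proportional :
  exists t, forall M, M \in S -> {in mid, forall k, M iw k = t * M i0 k}.
Proof.
have [k kmid M1k] := wedge_support k0mid l0mid indep.
pose t := M1 iw k / M1 i0 k; exists t.
have M1E := parallel_on_scale kmid M1k (row0_rowlast_parallelS M1S).
have M1_par M : M \in S -> parallel_on mid (M1 i0) (fun k => M iw k - t * M i0 k).
  by move=> MS; apply: parallel_on_sub_scale M1E (row0_rowlast_parallelS MS) _;
     apply: row0_rowlast_parallelD.
have M2E : {in mid, forall k, M2 iw k = t * M2 i0 k}.
  move=> j jmid; apply/eqP; rewrite -subr_eq0; apply/eqP; move: j jmid.
  apply: (parallel_on_eq0 k0mid l0mid indep (M1_par _ M2S)).
  exact: parallel_on_subr (row0_rowlast_parallelS M2S).
move=> M MS j jmid; apply/eqP; rewrite -subr_eq0; apply/eqP; move: j jmid.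
apply: (parallel_on_eq0 k0mid l0mid indep (M1_par _ MS)).
exact: parallel_on_sub_scale M2E (row0_rowlast_parallelS MS)
                             (row0_rowlast_parallelD MS M2S).
Qed.

Lemma gram_i1_shifted_ew t :
  (forall M, M \in S -> {in mid, forall k, M iw k = t * M i0 k}) ->
  forall M, M \in S -> '['e_i1, 'e_i1]_M * '[shifted_ew t, shifted_ew t]_M =
                        '['e_i1, shifted_ew t]_M ^+ 2.
Proof.
move=> rowlE.
have gram M : M \in S -> (exists2 k, k \in mid & M i0 k != 0) ->
    '['e_i1, 'e_i1]_M * '[shifted_ew t, shifted_ew t]_M = '['e_i1, shifted_ew t]_M ^+ 2.
  move=> MS [k kmid Mk].
  have kf := form_mid_shifted_ew (Ssym MS) (rowlE _ MS k kmid).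
  exact (gram_i1_degenerate (Ssym MS) (Sws MS) (Srank MS) kmid Mk kf).
have supp1 := wedge_support k0mid l0mid indep.
have supp2 : exists2 k, k \in mid & M2 i0 k != 0.
  by apply: (wedge_support l0mid k0mid (u2 := M1 i0)); rewrite mulrC [M2 i0 k0 * _]mulrC.
have supp12 : exists2 k, k \in mid & (M1 + M2) i0 k != 0.
  apply: (wedge_support k0mid l0mid (u2 := M2 i0)).
  by rewrite !mxE !mulrDl [M2 i0 l0 * _]mulrC (inj_eq (addIr _)).
(* If the first row of M vanishes on mid, those of M + M1, M + M2 and
   M + (M1 + M2) do not. *)
move=> M MS; have [|row0_eq0] := classic (exists2 k, k \in mid & M i0 k != 0).
  exact: gram.
have supp_shift (N : 'M_n) : (exists2 k, k \in mid & N i0 k != 0) ->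
    exists2 k, k \in mid & (M + N) i0 k != 0.
  case=> k kmid Nk; exists k => //; rewrite mxE.
  suff -> : M i0 k = 0 by rewrite add0r.
  by apply/eqP; apply: contra_notT row0_eq0 => Mk; exists k.
have q1 := gram _ M1S supp1; have q2 := gram _ M2S supp2.
have q12 := gram _ (memvD M1S M2S) supp12.
have qM1 := gram _ (memvD MS M1S) (supp_shift _ supp1).
have qM2 := gram _ (memvD MS M2S) (supp_shift _ supp2).
have qM12 := gram _ (memvD MS (memvD M1S M2S)) (supp_shift _ supp12).
rewrite !formDmx in q12 qM1 qM2 qM12.
exact: mul_eq_sqr_from_translates q1 q2 q12 qM1 qM2 qM12.
Qed.

Lemma congruent_to_WS11 :
  exists2 Q : 'M[K]_n, Q \in unitmx & forall M, M \in S -> WS11 (Q *m M *m Q^T).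
Proof.
have [t rowlE] := rowlast_proportional.
have gram := gram_i1_shifted_ew rowlE.
set f := shifted_ew t in gram.
have f_mid M : M \in S -> {in mid, forall j, '[f, 'e_j]_M = 0}.
  move=> MS j jmid; rewrite form_sym ?Ssym //.
  exact (form_mid_shifted_ew (Ssym MS) (rowlE _ MS j jmid)).
have e1_mid M : M \in S -> {in mid, forall j, '['e_i1, 'e_j]_M = 0}.
  by move=> MS j jmid; rewrite formee (i1_mid_eq0 (Sws MS) jmid).
have ew_sub (Q : 'M_n) : (f <= Q)%MS -> (('e_i0 : 'rV_n) <= Q)%MS ->
    (('e_iw : 'rV_n) <= Q)%MS.
  by move=> fQ e0Q; rewrite -(subrK (t *: 'e_i0) 'e_iw) addmx_sub ?scalemx_sub.
(* If ['[f, f]_Ms != 0], all Gram matrices of (e_i1, f) are multiples of that of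
   Ms, with common kernel vector e_i1 - s f. *)
have [[Ms MsS fMs] | f_iso] := classic (exists2 Ms, Ms \in S & '[f, f]_Ms != 0).
- pose s := '['e_i1, f]_Ms / '[f, f]_Ms.
  have [fQ RQ e0Q] := frame_sub f ('e_i1 - s *: f).
  exists (frame f ('e_i1 - s *: f)).
    apply: frame_unitmx (ew_sub _ fQ e0Q).
    by rewrite -[X in (X <= _)%MS](subrK (s *: f)) addmx_sub ?scalemx_sub ?RQ.
  move=> M MS; have := gram _ (memvD MS MsS); rewrite !formDmx => gramD.
  have [e1f e1e1] := degenerate_forms_proportional fMs (gram _ MS) (gram _ MsS) gramD.
  apply: (WS11_frame (Ssym MS) (Sws MS)).
  + exact: f_mid.
  + by move=> j jmid; rewrite formBl formZl f_mid ?e1_mid // mulr0 subr0.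
  + by rewrite formBr formZr (form_sym f) ?Ssym // e1f -/s subrr.
  + by rewrite !formBl !formBr !formZl !formZr (form_sym f) ?Ssym // e1f e1e1 -/s; ring.
- exists (frame 'e_i1 f).
    by have [e1Q fQ e0Q] := frame_sub 'e_i1 f; apply: frame_unitmx e1Q (ew_sub _ fQ e0Q).
  move=> M MS; have ff : '[f, f]_M = 0.
    by apply/eqP; apply: contra_notT f_iso => ?; exists M.
  have e1f : '['e_i1, f]_M = 0.
    by apply/eqP; rewrite -sqrf_eq0 -(gram _ MS) ff mulr0.
  by apply: (WS11_frame (Ssym MS) (Sws MS)); [exact: e1_mid | exact: f_mid | |].
Qed.

End Independent.
End Space.
End WeakShape.

Theorem lemma4p8 (K : fieldType) (n : nat) (S : {vspace 'M[K]_n}) :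
  (4 <= n)%N ->
  (forall M, M \in S -> M^T = M) ->
  (forall M, M \in S -> (\rank M <= 3)%N) ->
  (forall M, M \in S -> WS11 (upleft M)) ->
  (5 < \dim (linfun (@upleft K n) @: S))%N ->
  exists2 Q : 'M[K]_n, Q \in unitmx & forall M, M \in S -> WS11 (Q *m M *m Q^T).
Proof.
case: n S => [|[|[|[|p]]]] // S _ Ssym Srank Sws Sdim.
have [M1 [M2 [k0 [l0 [M1S M2S k0mid l0mid indep]]]]] :=
  exists_row0_indep Ssym Sws (ltnW Sdim).
exact (congruent_to_WS11 Ssym Srank Sws M1S M2S k0mid l0mid indep).
Qed.
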